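(* Let $K$ be a spherically complete valued field and $d\ge 1$. Then every nested family $\{C_i\}_{i\in I}$ of nonempty convex subsets of $K^d$ (i.e. for all $i,j$, $C_i\subseteq C_j$ or $C_j\subseteq C_i$) has nonempty intersection.
   Context: $K$ is a field with valuation $\nu:K\to\Gamma\cup\{\infty\}$, valuation ring $\mathcal{O}$. A ball in $K$ is a set $\{x:\nu(x-c)\ge r\}$ or $\{x:\nu(x-c)>r\}$ with $c\in K$, $r\in\Gamma$. $K$ is spherically complete if every nested family of balls in $K$ has nonempty intersection. A set $X\subseteq K^d$ is convex if it is closed under combinations $\sum_{i=1}^n\alpha_ix_i$ with $x_i\in X$, $\alpha_i\in\mathcal{O}$, $\sum\alpha_i=1$. *)

From mathcomp Require Import all_boot all_order all_algebra.
Set Implicit Arguments. Unset Strict Implicit. Unset Printing Implicit Defensive.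
Import GRing.Theory.
Local Open Scope ring_scope.

(* The value group Gamma is a Z-module with an explicit order relation [le];
   the value infinity is represented by [None] in [option Gamma]. *)
Section Valued.
Variables (K : fieldType) (G : zmodType) (le : rel G) (nu : K -> option G).

Definition ole (a b : option G) : bool :=
  match a, b with
  | _, None => true
  | None, Some _ => false
  | Some x, Some y => le x y
  end.
Definition olt (a b : option G) : bool := ole a b && ~~ ole b a.

Definition oadd (a b : option G) : option G :=
  match a, b with
  | Some x, Some y => Some (x + y)
  | _, _ => None
  end.

Record is_valuation : Prop := {
  le_refl : forall a, le a a;
  le_anti : forall a b, le a b -> le b a -> a = b;
  le_trans : forall a b c, le a b -> le b c -> le a c;
  le_total : forall a b, le a b || le b a;
  le_add : forall a b c, le a b -> le (a + c) (b + c);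
  nu_inf : forall x, nu x = None <-> x = 0;
  nu_mul : forall x y, nu (x * y) = oadd (nu x) (nu y);
  nu_add : forall x y, ole (nu x) (nu (x + y)) || ole (nu y) (nu (x + y));
  nu_surj : forall g : G, exists x, nu x = Some g
}.

Definition in_O (a : K) : Prop := ole (Some 0) (nu a).

Definition closed_ball (c : K) (r : G) : K -> Prop :=
  fun x => ole (Some r) (nu (x - c)).
Definition open_ball (c : K) (r : G) : K -> Prop :=
  fun x => olt (Some r) (nu (x - c)).
Definition is_ball (B : K -> Prop) : Prop :=
  exists (c : K) (r : G),
    (forall x, B x <-> closed_ball c r x) \/ (forall x, B x <-> open_ball c r x).

Definition subset_of {T : Type} (A B : T -> Prop) : Prop := forall x, A x -> B x.

Definition nested {I T : Type} (F : I -> T -> Prop) : Prop :=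
  forall i j, subset_of (F i) (F j) \/ subset_of (F j) (F i).

Definition spherically_complete : Prop :=
  forall (I : Type) (B : I -> K -> Prop),
    (forall i, is_ball (B i)) -> nested B -> exists x, forall i, B i x.

Definition convex (d : nat) (X : 'rV[K]_d -> Prop) : Prop :=
  forall (n : nat) (x : 'I_n -> 'rV[K]_d) (alpha : 'I_n -> K),
    (forall i, X (x i)) -> (forall i, in_O (alpha i)) ->
    \sum_(i < n) alpha i = 1 ->
    X (\sum_(i < n) alpha i *: x i).

End Valued.

From mathcomp Require Import all_boot all_order all_algebra ring.
From Stdlib Require Import Classical.
Set Implicit Arguments. Unset Strict Implicit. Unset Printing Implicit Defensive.
Import GRing.Theory.
Local Open Scope ring_scope.

(* Call P ⊆ K segment-closed if x + a(y - x) ∈ P whenever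
   x, y ∈ P and a ∈ O.  For such P, with x ∈ P and g = ν(y - x):
   - if y ∈ P, the closed ball B(x, g) is contained in P;
   - if y ∉ P, then P is contained in B(x, g).
   Given a nested family (P_i) of nonempty segment-closed sets without a
   smallest member, every P_i strictly contains some P_j, and a point
   y ∈ P_i \ P_j together with x ∈ P_j yields a ball B(x, ν(y - x)) squeezed
   between P_j and P_i.  The balls containing some P_j form a nested family,
   so spherical completeness gives a point in all of them, hence in all P_i.

   A convex set of rows projects onto a segment-closed set of
   K along each coordinate, and its fibers over a coordinate value are again
   convex.  Fixing the coordinates one at a time with the one-dimensional
   result shrinks the family until all its points coincide. *)

Section Valuation.
Variables (K : fieldType) (G : zmodType) (le : rel G) (nu : K -> option G).
Hypothesis Hnu : is_valuation le nu.

Lemma ole_trans a b c : ole le a b -> ole le b c -> ole le a c.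
Proof. by case: a => [a|]; case: b => [b|]; case: c => [c|] //=; apply: (le_trans Hnu). Qed.

Lemma le_addl_cancel g e : le g (e + g) -> le 0 e.
Proof. by move=> h; have := le_add Hnu (- g) h; rewrite subrr addrK. Qed.

Lemma nu1 : nu 1 = Some 0.
Proof.
have := nu_mul Hnu 1 1; rewrite mulr1.
case E: (nu 1) => [g|] /=; last by move: E => /(nu_inf Hnu) /eqP; rewrite oner_eq0.
move=> [] gg; have: g + g - g = g - g by rewrite -gg.
by rewrite addrK subrr => ->.
Qed.

Lemma nuN1 : nu (-1) = Some 0.
Proof.
have := nu_mul Hnu (-1) (-1); rewrite mulrNN mulr1 nu1.
case E: (nu (-1)) => [h|] /=; last first.
  by move: E => /(nu_inf Hnu) /eqP; rewrite oppr_eq0 oner_eq0.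
move=> [] hh.
have le0h : le 0 h.
  case/orP: (le_total Hnu 0 h) => // hle.
  by have := le_add Hnu h hle; rewrite -hh add0r.
have := le_add Hnu h le0h; rewrite -hh add0r => leh0.
by rewrite (le_anti Hnu leh0 le0h).
Qed.

Lemma nuN x : nu (- x) = nu x.
Proof. by rewrite -mulN1r (nu_mul Hnu) nuN1; case: (nu x) => //= g; rewrite add0r. Qed.

Lemma nu_addr r a b : ole le r (nu a) -> ole le r (nu b) -> ole le r (nu (a + b)).
Proof.
by move=> ha hb; case/orP: (nu_add Hnu a b) => h; [apply: ole_trans ha h|apply: ole_trans hb h].
Qed.

Lemma in_O_1B a : in_O le nu a -> in_O le nu (1 - a).
Proof. by move=> ha; apply: nu_addr; rewrite ?nuN // nu1 /= (le_refl Hnu). Qed.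

Lemma in_O_div u v g : v != 0 -> nu v = Some g -> ole le (Some g) (nu u) ->
  in_O le nu (u / v).
Proof.
move=> v0 hv; rewrite -{1}(divfK v0 u) (nu_mul Hnu) hv /in_O.
by case: (nu (u / v)) => //= e; apply: le_addl_cancel.
Qed.

Lemma closed_ball_sub c r c' r' w : le r r' ->
  closed_ball le nu c r w -> closed_ball le nu c' r' w ->
  subset_of (closed_ball le nu c' r') (closed_ball le nu c r).
Proof.
rewrite /closed_ball => hr hw hw' x hx.
have hr' : ole le (Some r) (Some r') by [].
have -> : x - c = (x - c') + ((c' - w) + (w - c)) by ring.
apply: nu_addr; first exact: ole_trans hr' hx.
by apply: nu_addr => //; rewrite -opprB nuN; apply: ole_trans hr' hw'.
Qed.

Lemma closed_ball_nested c r c' r' w :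
  closed_ball le nu c r w -> closed_ball le nu c' r' w ->
  subset_of (closed_ball le nu c r) (closed_ball le nu c' r') \/
  subset_of (closed_ball le nu c' r') (closed_ball le nu c r).
Proof.
move=> h h'; case/orP: (le_total Hnu r r') => hr.
  by right; apply: closed_ball_sub hr h h'.
by left; apply: closed_ball_sub hr h' h.
Qed.

Definition segment_closed (P : K -> Prop) : Prop :=
  forall x y a, P x -> P y -> in_O le nu a -> P (x + a * (y - x)).

Lemma segment_closed_ball (P : K -> Prop) x y g : segment_closed P ->
  P x -> P y -> nu (y - x) = Some g -> subset_of (closed_ball le nu x g) P.
Proof.
move=> HP Px Py hg z hz.
have yx : y - x != 0 by apply/eqP => /(nu_inf Hnu); rewrite hg.
have -> : z = x + (z - x) / (y - x) * (y - x) by rewrite divfK // addrC subrK.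
by apply: HP => //; apply: (in_O_div yx hg hz).
Qed.

Lemma segment_closed_in_ball (P : K -> Prop) x y g : segment_closed P ->
  P x -> ~ P y -> nu (y - x) = Some g -> subset_of P (closed_ball le nu x g).
Proof.
move=> HP Px nPy hg w Pw; rewrite /closed_ball.
case Ew: (nu (w - x)) => [g'|] //=.
case/orP: (le_total Hnu g g') => // lg'g; exfalso; apply: nPy.
have wx : w - x != 0 by apply/eqP => /(nu_inf Hnu); rewrite Ew.
have -> : y = x + (y - x) / (w - x) * (w - x) by rewrite divfK // addrC subrK.
by apply: HP => //; apply: (in_O_div wx Ew); rewrite hg.
Qed.

Hypothesis Hsc : spherically_complete le nu.

Theorem segment_closed_nested_meet (I : Type) (P : I -> K -> Prop) :
  (forall i, exists x, P i x) -> (forall i, segment_closed (P i)) -> nested P ->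
  exists z, forall i, P i z.
Proof.
move=> Hne Hseg Hnest.
case: (classic (exists i0, forall i, subset_of (P i0) (P i))) => [[i0 Hi0]|Hno].
  by case: (Hne i0) => z hz; exists z => i; apply: Hi0.
have Hshrink i : exists j y, subset_of (P j) (P i) /\ P i y /\ ~ P j y.
  apply: NNPP => Hn; apply: Hno; exists i => j.
  case: (Hnest i j) => // Hji y Py; apply: NNPP => nPy; apply: Hn.
  by exists j, y.
pose J := {cr : K * G | exists i, subset_of (P i) (closed_ball le nu cr.1 cr.2)}.
have [||z Hz] := Hsc (B := fun j : J => closed_ball le nu (sval j).1 (sval j).2).
- by move=> j; exists (sval j).1, (sval j).2; left.
- move=> [[c r] [i Hi]] [[c' r'] [i' Hi']] /=.
  case: (Hnest i i') => Hs.
    have [w Pw] := Hne i.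
    by apply: (closed_ball_nested (w := w)); [apply: Hi|apply: Hi' (Hs _ Pw)].
  have [w Pw] := Hne i'.
  by apply: (closed_ball_nested (w := w)); [apply: Hi (Hs _ Pw)|apply: Hi'].
exists z => i.
have [j [y [Hji [Py nPy]]]] := Hshrink i; have [x Px] := Hne j.
case E: (nu (y - x)) => [g|]; last first.
  by move: E => /(nu_inf Hnu) /eqP; rewrite subr_eq0 => /eqP yx; rewrite yx in nPy.
have Pj_ball := segment_closed_in_ball (Hseg j) Px nPy E.
apply: (segment_closed_ball (Hseg i) (Hji _ Px) Py E).
exact: (Hz (exist _ (x, g) (ex_intro _ j Pj_ball))).
Qed.

Section Rows.
Variable d : nat.

Lemma convex_segment (X : 'rV[K]_d -> Prop) x y a : convex le nu X ->
  X x -> X y -> in_O le nu a -> X (x + a *: (y - x)).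
Proof.
move=> HX hx hy ha.
have -> : x + a *: (y - x) = (1 - a) *: x + a *: y.
  by rewrite scalerBr scalerBl scale1r addrA addrAC.
have := HX 2%N (fun i => if val i == 0%N then x else y)
  (fun i => if val i == 0%N then 1 - a else a).
rewrite !big_ord_recr !big_ord0 /= !add0r; apply.
- by case=> [[|[|m]] ?].
- by case=> [[|[|m]] ?] //=; apply: in_O_1B.
- by rewrite subrK.
Qed.

Definition coord_image (X : 'rV[K]_d -> Prop) (j : 'I_d) : K -> Prop :=
  fun s => exists x, X x /\ x ord0 j = s.

Lemma coord_image_segment_closed X j : convex le nu X ->
  segment_closed (coord_image X j).
Proof.
move=> HX s1 s2 a [x1 [h1 <-]] [x2 [h2 <-]] ha.
by exists (x1 + a *: (x2 - x1)); split; [apply: convex_segment|rewrite !mxE].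
Qed.

Lemma convex_fiber (X : 'rV[K]_d -> Prop) (j : 'I_d) t : convex le nu X ->
  convex le nu (fun x : 'rV[K]_d => X x /\ x ord0 j = t).
Proof.
move=> HX n x al hx ha hs; split; first by apply: HX => // i; case: (hx i).
rewrite summxE.
under eq_bigr => k _ do rewrite mxE (proj2 (hx k)).
by rewrite -big_distrl /= hs mul1r.
Qed.

(* Induction on n: if the points of the family already agree on all
   coordinates j ≥ n, fixing coordinate n - 1 by the one-dimensional case
   reduces to agreement on coordinates j ≥ n - 1. *)
Lemma nested_convex_meet_agree (n : nat) (I : Type) (C : I -> 'rV[K]_d -> Prop) :
  (forall i, exists x, C i x) -> (forall i, convex le nu (C i)) -> nested C ->
  (forall i i' x y (j : 'I_d), (n <= j)%N -> C i x -> C i' y -> x ord0 j = y ord0 j) ->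
  exists x, forall i, C i x.
Proof.
elim: n I C => [|n IH] I C Hne Hconv Hnest Hagree.
  case: (classic (exists i : I, True)) => [[i0 _]|nI]; last first.
    by exists 0 => i; exfalso; apply: nI; exists i.
  have [x0 hx0] := Hne i0; exists x0 => i; have [y hy] := Hne i.
  by have -> : x0 = y by apply/rowP => j; apply: (Hagree i0 i).
case: (ltnP n d) => hn; last first.
  apply: IH => // i i' x y j hj; apply: Hagree.
  by have := ltn_ord j; rewrite ltnNge (leq_trans hn hj).
pose j := Ordinal hn.
have [t Ht] : exists t, forall i, coord_image (C i) j t.
  apply: segment_closed_nested_meet.
  - by move=> i; have [x hx] := Hne i; exists (x ord0 j), x.
  - by move=> i; apply: coord_image_segment_closed.
  - by move=> i i'; case: (Hnest i i') => Hs; [left|right];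
      move=> s [x [hx <-]]; exists x; split => //; apply: Hs.
have [x Hx] : exists x, forall i, C i x /\ x ord0 j = t.
  apply: (IH I (fun i x => C i x /\ x ord0 j = t)).
  - by move=> i; have [x hx] := Ht i; exists x.
  - by move=> i; apply: convex_fiber.
  - by move=> i i'; case: (Hnest i i') => Hs; [left|right];
      move=> x [hx hxt]; split => //; apply: Hs.
  - move=> i i' x y k hk [hx hxt] [hy hyt].
    case: (eqVneq (val k) n) => hkn.
      have -> : k = j by apply: val_inj.
      by rewrite hxt hyt.
    by apply: (Hagree i i'); rewrite // ltn_neqAle eq_sym hkn hk.
by exists x => i; case: (Hx i).
Qed.

End Rows.
End Valuation.

Theorem lemma3p4 (K : fieldType) (G : zmodType) (le : rel G) (nu : K -> option G)
  (Hnu : is_valuation le nu) (Hsc : spherically_complete le nu)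
  (d : nat) (Hd : (1 <= d)%N)
  (I : Type) (C : I -> 'rV[K]_d -> Prop)
  (Hne : forall i, exists x, C i x)
  (Hconv : forall i, convex le nu (C i))
  (Hnest : nested C) :
  exists x, forall i, C i x.
Proof.
(* agreement on the coordinates j ≥ d holds vacuously *)
apply: (nested_convex_meet_agree Hnu Hsc (n := d)) => // i i' x y j hj.
by have := ltn_ord j; rewrite ltnNge hj.
Qed.
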